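(* Let $m$ be an integer with $m\ge 1$ or $m\le -2$, let $T_j(z,w)=w^jS_j(z/w)$, let \[F=\left[(xyw-u^2z)w^{2m}+(xyzw+4u^2w^2-x^2w^2-y^2w^2-u^2z^2)T_mT_{m-1}\right]T_{m-1}-u^2w^{2m}T_m,\] let $S=\{F=0\}\subset\mathbb P^2(x:y:u)\times\mathbb P^1(z:w)$ and $\phi:S\to\mathbb P^1$, $(x:y:u,z:w)\mapsto(z:w)$. The degenerate fibers of $\phi$ (those over points $(z:w)$ for which $F=F_x=F_y=F_u=0$ has a solution $(x:y:u)\in\mathbb P^2$) are exactly: $\phi^{-1}(1:0)=\{(x:y:u)\mid u^2=0\}$; $\phi^{-1}(z:1)=\{(x:y:u)\mid u^2=0\}$ where $z$ is a root of $S_{m-1}(z)$; $\phi^{-1}(z:1)=\{(x:y:u)\mid (xS_m(z)-yS_{m-1}(z))(yS_m(z)-xS_{m-1}(z))=0\}$ where $z$ is a root of $S_{3m}(z)$; $\phi^{-1}(z:1)=\{(x:y:u)\mid (x-y)^2-(2-z)u^2=0\}$ where $z$ is a root of $S_m(z)-S_{m-1}(z)$; $\phi^{-1}(z:1)=\{(x:y:u)\mid (x+y)^2-(2+z)u^2=0\}$ where $z$ is a root of $S_m(z)+S_{m-1}(z)$.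
   Context: The Chebyshev polynomials $S_j(\omega)$ are defined for all integers $j$ by $S_0=1$, $S_1=\omega$, $S_{j+1}=\omega S_j-S_{j-1}$. $S$ is the projective closure of the natural model of the canonical component of the $\mathrm{SL}_2(\mathbb C)$ character variety of the double twist link $J(3,2m+1)$; each fiber of $\phi$ is a conic in $\mathbb P^2(x:y:u)$. *)

From mathcomp Require Import all_boot all_algebra.
From mathcomp Require Import Rstruct complex.
From mathcomp Require Import mpoly ring zify.
Set Implicit Arguments.
Unset Strict Implicit.
Unset Printing Implicit Defensive.
Import GRing.Theory Num.Theory.
Local Open Scope ring_scope.

Definition C : numClosedFieldType := (Rdefinitions.R)[i]%C.

Section Cheb.
Variable R : fieldType.

(** Chebyshev polynomials S_j, j : int, defined by S_0 = 1, S_1 = z,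
    S_(j+1) = z S_j - S_(j-1) (for all integers j).  On nonnegative indices
    we compute them by the forward recurrence; the backward recurrence forces
    S_(-1) = 0 and S_(-k-2) = - S_k. *)
Fixpoint Spair (z : R) (n : nat) : R * R :=
  match n with
  | 0 => (1, z)
  | n'.+1 => let p := Spair z n' in (p.2, z * p.2 - p.1)
  end.
Definition Snat (z : R) (n : nat) : R := (Spair z n).1.

Definition cheb (j : int) (z : R) : R :=
  match j with
  | Posz n => Snat z n
  | Negz 0 => 0
  | Negz k.+1 => - Snat z k
  end.

(** T_j(z,w) = w^j S_j(z/w), exactly as in the paper (integer power of w;
    meaningful for w <> 0). *)
Definition Tj (j : int) (z w : R) : R := w ^ j * cheb j (z / w).

(** Homogeneous (polynomial) version, for nonnegative degree n:
    Th_0 = 1, Th_1 = z, Th_(n+2) = z Th_(n+1) - w^2 Th_n;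
    it equals w^n S_n(z/w) when w <> 0 (lemma Th_Tj) and makes sense at w = 0. *)
Fixpoint Tpair (z w : R) (n : nat) : R * R :=
  match n with
  | 0 => (1, z)
  | n'.+1 => let p := Tpair z w n' in (p.2, z * p.2 - w ^+ 2 * p.1)
  end.
Definition Th (z w : R) (n : nat) : R := (Tpair z w n).1.

Definition mx : {mpoly R[3]} := 'X_0.
Definition my : {mpoly R[3]} := 'X_1.
Definition mu : {mpoly R[3]} := 'X_2.
Definition cst (a : R) : {mpoly R[3]} := a%:MP.

Definition Qform (z w : R) : {mpoly R[3]} :=
  mx * my * cst (z * w) + 4 * mu ^+ 2 * cst (w ^+ 2) - mx ^+ 2 * cst (w ^+ 2)
  - my ^+ 2 * cst (w ^+ 2) - mu ^+ 2 * cst (z ^+ 2).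

Definition Fpaper (m : int) (z w : R) : {mpoly R[3]} :=
  ((mx * my * cst w - mu ^+ 2 * cst z) * cst (w ^ (2 * m))
    + Qform z w * cst (Tj m z w * Tj (m - 1) z w)) * cst (Tj (m - 1) z w)
  - mu ^+ 2 * cst (w ^ (2 * m) * Tj m z w).

(** The bihomogeneous polynomial defining S (valid at every (z:w), including
    w = 0).  For m >= 1 it is F itself (all T_j polynomial); for m = -n <= -2
    the T_j with negative index are Laurent in w, and the polynomial is
    w^(6n-2) F (no further power of w divides it), expanded using
    T_(-k) = - w^(2-2k) Th_(k-2). *)
Definition Fpol (m : int) (z w : R) : {mpoly R[3]} :=
  match m with
  | Posz k =>
      ((mx * my * cst w - mu ^+ 2 * cst z) * cst (w ^+ (2 * k))
        + Qform z w * cst (Th z w k * Th z w k.-1)) * cst (Th z w k.-1)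
      - mu ^+ 2 * cst (w ^+ (2 * k) * Th z w k)
  | Negz k => (* m = -(k+1) *)
      - (mx * my * cst w - mu ^+ 2 * cst z) * cst (w ^+ (2 * k) * Th z w k)
      - Qform z w * cst (Th z w k.-1 * Th z w k ^+ 2)
      + mu ^+ 2 * cst (w ^+ (2 * k.+1) * Th z w k.-1)
  end.

Definition clr (m : int) : nat :=
  match m with Posz _ => 0 | Negz k => 6 * k + 4 end.

Definition pt3 (x y u : R) : 'I_3 -> R := fun i => nth 0 [:: x; y; u] i.

Definition degenerate (P : {mpoly R[3]}) : Prop :=
  exists x y u : R, (x, y, u) != (0, 0, 0) /\
    P.@[pt3 x y u] = 0 /\ (forall i : 'I_3, (P^`M(i)).@[pt3 x y u] = 0).


Lemma SnatSS (z : R) n : Snat z n.+2 = z * Snat z n.+1 - Snat z n.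
Proof. by rewrite /Snat /=. Qed.
Lemma cheb0 (z : R) : cheb 0 z = 1. Proof. by []. Qed.
Lemma cheb1 (z : R) : cheb 1 z = z. Proof. by []. Qed.
Lemma cheb_rec (z : R) (j : int) : cheb (j + 1) z = z * cheb j z - cheb (j - 1) z.
Proof.
case: j => [[|[|n]]|[|[|k]]].
- by rewrite /cheb /Snat /=; ring.
- by rewrite /cheb /Snat /=; ring.
- have -> : (Posz n.+2 + 1 = Posz n.+3)%R by lia.
  have -> : (Posz n.+2 - 1 = Posz n.+1)%R by lia.
  by rewrite /cheb SnatSS.
- have -> : (Negz 0 + 1 = 0)%R by lia.
  have -> : (Negz 0 - 1 = Negz 1)%R by lia.
  by rewrite /cheb /Snat /=; ring.
- have -> : (Negz 1 + 1 = Negz 0)%R by lia.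
  have -> : (Negz 1 - 1 = Negz 2)%R by lia.
  by rewrite /cheb /Snat /=; ring.
- have -> : (Negz k.+2 + 1 = Negz k.+1)%R by lia.
  have -> : (Negz k.+2 - 1 = Negz k.+3)%R by lia.
  by rewrite /cheb SnatSS; ring.
Qed.


Lemma Tpair_Spair (z w : R) n : w != 0 ->
  Tpair z w n = (w ^+ n * (Spair (z / w) n).1, w ^+ n.+1 * (Spair (z / w) n).2).
Proof.
move=> wn0; elim: n => [|n IH] /=.
  by congr (_, _); rewrite ?expr0 ?expr1 ?mul1r //; field.
by rewrite IH /=; congr (_, _); rewrite !exprS; field.
Qed.

Lemma Th_Snat (z w : R) n : w != 0 -> Th z w n = w ^+ n * Snat (z / w) n.
Proof. by move=> wn0; rewrite /Th Tpair_Spair. Qed.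

Lemma Snat_Th (z w : R) n : w != 0 -> Snat (z / w) n = Th z w n / w ^+ n.
Proof. by move=> wn0; rewrite Th_Snat //; field; rewrite expf_neq0. Qed.

Lemma Tj_Posz (z w : R) n : w != 0 -> Tj (Posz n) z w = Th z w n.
Proof. by move=> wn0; rewrite Th_Snat. Qed.

Lemma Tj_NegzS (z w : R) k : w != 0 ->
  Tj (Negz k.+1) z w = - Th z w k / (w ^+ k.+2 * w ^+ k).
Proof.
move=> wn0; rewrite /Tj /= Snat_Th //.
have h1 : w ^+ k != 0 by rewrite expf_neq0.
have h2 : w ^+ k.+2 != 0 by rewrite expf_neq0.
have -> : w ^ Negz k.+1 = (w ^+ k.+2)^-1 by []. by field; rewrite h1 h2.
Qed.

Lemma pw_split (w : R) k a b n : n = (a * k + b)%N ->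
  w ^+ n = (w ^+ k) ^+ a * w ^+ b.
Proof. by move=> ->; rewrite -exprM -exprD mulnC. Qed.

Lemma Fpaper_nf (m : int) (z w : R) :
  let Tm := Tj m z w in let Tm1 := Tj (m - 1) z w in let p := w ^ (2 * m) in
  Fpaper m z w =
    mx * my * cst ((w * p + z * w * Tm * Tm1) * Tm1)
  + (mx ^+ 2 + my ^+ 2) * cst (- w ^+ 2 * Tm * Tm1 * Tm1)
  + mu ^+ 2 * cst ((- z * p + (4 * w ^+ 2 - z ^+ 2) * Tm * Tm1) * Tm1 - p * Tm).
Proof. rewrite /Fpaper /Qform /cst /mx /my /mu /=; ring. Qed.

Lemma nf_scale (e A B Cc : R) :
  cst e * (mx * my * cst A + (mx ^+ 2 + my ^+ 2) * cst B + mu ^+ 2 * cst Cc) =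
  mx * my * cst (e * A) + (mx ^+ 2 + my ^+ 2) * cst (e * B) + mu ^+ 2 * cst (e * Cc).
Proof. rewrite /cst; ring. Qed.

Lemma Fpol_Fpaper (m : int) (z w : R) : (1 <= m \/ m <= -2) -> w != 0 ->
  Fpol m z w = cst (w ^+ clr m) * Fpaper m z w.
Proof.
move=> hm wn0; case: m hm => [k|k] hm.
- case: k hm => [|k] hm; first by case: hm; lia.
  have e1 : (Posz k.+1 - 1 = Posz k)%R by lia.
  have e2 : (2 * Posz k.+1 = Posz (2 * k.+1))%R by lia.
  rewrite /Fpaper e1 e2 !Tj_Posz // /Fpol /clr /=.
  rewrite /cst /Qform; ring.
- case: k hm => [|k] hm; first by case: hm; lia.
  have e1 : (Negz k.+1 - 1 = Negz k.+2)%R by lia.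
  have e2 : (2 * Negz k.+1 = Negz (2 * k + 3))%R by lia.
  rewrite Fpaper_nf e1 e2 !Tj_NegzS // /Fpol /clr /=.
  set W := w ^+ k.
  have hW : W != 0 by rewrite expf_neq0.
  have -> : w ^ Negz (2 * k + 3) = (w ^+ (2 * k + 3).+1)^-1 by [].
  rewrite (@pw_split w k 2 4 ((2 * k + 3).+1)); last by lia.
  rewrite (@pw_split w k 1 2 (k.+2)); last by lia.
  rewrite (@pw_split w k 1 3 (k.+3)); last by lia.
  rewrite (@pw_split w k 2 2 ((2 * k.+1))); last by lia.
  rewrite (@pw_split w k 2 4 ((2 * k.+2))); last by lia.
  rewrite (@pw_split w k 6 10 ((6 * k.+1 + 4))); last by lia.
  rewrite (@pw_split w k 1 1 (k.+1)); last by lia.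
  rewrite -/W.
  set a := Th z w k; set b := Th z w k.+1.
  have -> : - (mx * my * cst w - mu ^+ 2 * cst z) * cst (W ^+ 2 * w ^+ 2 * b)
      - Qform z w * cst (a * b ^+ 2) + mu ^+ 2 * cst (W ^+ 2 * w ^+ 4 * a) =
    mx * my * cst (- W ^+ 2 * w ^+ 3 * b - z * w * a * b ^+ 2)
  + (mx ^+ 2 + my ^+ 2) * cst (w ^+ 2 * a * b ^+ 2)
  + mu ^+ 2 * cst (z * W ^+ 2 * w ^+ 2 * b - (4 * w ^+ 2 - z ^+ 2) * a * b ^+ 2
                   + W ^+ 2 * w ^+ 4 * a).
    by rewrite /Qform /cst /mx /my /mu; ring.
  rewrite nf_scale; congr (_ * cst _ + _ * cst _ + _ * cst _).
  all: by field; rewrite ?hW ?wn0.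
Qed.
End Cheb.
Arguments mx {R}.
Arguments my {R}.
Arguments mu {R}.

From mathcomp Require Import all_boot all_algebra.
From mathcomp Require Import Rstruct complex mpoly ring zify.
Set Implicit Arguments.
Unset Strict Implicit.
Unset Printing Implicit Defensive.
Import GRing.Theory Num.Theory.
Local Open Scope ring_scope.

(* At (z:1) the fibre is the conic A xy + B (x^2 + y^2) + C u^2 with
   A = (1 + z s t) t, B = -s t^2, C = (-z + (4 - z^2) s t) t - s, where
   s = S_m(z), t = S_(m-1)(z).  Such a conic is singular exactly when C = 0 or
   2B = A or 2B = -A.  The Cassini identity s^2 - z s t + t^2 = 1 turns these
   into S_(3m)(z) = 0 (as C = -S_(3m)(z)), t (s + t)^2 = 0 and t (s - t)^2 = 0,
   and under each condition it factors the conic as listed.  Over (1:0) all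
   T_j equal 1 up to sign and only the u^2 term survives. *)

Lemma mul_neq0_eq0 (R : idomainType) (k a : R) : k != 0 -> (k * a = 0 <-> a = 0).
Proof.
move=> k0; split=> [/eqP|->]; last by rewrite mulr0.
by rewrite mulf_eq0 (negbTE k0) => /eqP.
Qed.

Lemma eq0_scaled (R : idomainType) (k a b : R) : k != 0 -> a = k * b -> (a = 0 <-> b = 0).
Proof. by move=> k0 ->; exact: mul_neq0_eq0. Qed.

Section TernaryQuadraticForm.
Variable R : fieldType.

Definition qform (A B Cu : R) : {mpoly R[3]} :=
  mx * my * cst A + (mx ^+ 2 + my ^+ 2) * cst B + mu ^+ 2 * cst Cu.

Lemma mderivXU (i j : 'I_3) : ('X_j : {mpoly R[3]})^`M(i) = (j == i)%:R%:MP.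
Proof.
rewrite mderivX mnm1E; case: eqP => [->|_]; last by rewrite scale0r.
have -> : (U_(i) - U_(i))%MM = 0%MM by apply/mnmP=> k; rewrite !mnmE subnn.
by rewrite mpolyX0 scale1r.
Qed.

Lemma qform_eval (A B Cu x y u : R) :
  (qform A B Cu).@[pt3 x y u] = x * y * A + (x ^+ 2 + y ^+ 2) * B + u ^+ 2 * Cu.
Proof.
by rewrite /qform /mx /my /mu /cst !(mevalD, mevalM, mevalC, mevalXU) /pt3 /= !expr2.
Qed.

Lemma qform_deriv (A B Cu x y u : R) (i : 'I_3) :
  ((qform A B Cu)^`M(i)).@[pt3 x y u] =
  if i == 0 :> nat then y * A + 2 * x * B
  else if i == 1 :> nat then x * A + 2 * y * B else 2 * u * Cu.
Proof.
rewrite /qform /mx /my /mu /cst !(mderivD, mderivM, mderivC, expr2, mderivXU).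
rewrite !(mevalD, mevalM, mevalC, mevalXU).
by case: i => [[|[|[|k]]] hk] //=; rewrite /pt3 /=; ring.
Qed.

Lemma degenerate_qform_of (A B Cu : R) :
  [\/ Cu = 0, 2 * B - A = 0 | 2 * B + A = 0] -> degenerate (qform A B Cu).
Proof.
have sing x y u : (x, y, u) != (0, 0, 0) -> (qform A B Cu).@[pt3 x y u] = 0 ->
    (forall i : 'I_3, ((qform A B Cu)^`M(i)).@[pt3 x y u] = 0) ->
    degenerate (qform A B Cu).
  by move=> h1 h2 h3; exists x, y, u.
case=> [hC|hm|hp].
- apply: (sing 0 0 1); [by rewrite !xpair_eqE oner_eq0 andbF|by rewrite qform_eval hC; ring|].
  by move=> i; rewrite qform_deriv hC; case: ifP => _; [|case: ifP => _]; ring.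
- have hA : A = 2 * B by apply/eqP; rewrite eq_sym -subr_eq0 hm.
  apply: (sing 1 (-1) 0); [by rewrite !xpair_eqE oner_eq0|by rewrite qform_eval hA; ring|].
  by move=> i; rewrite qform_deriv hA; case: ifP => _; [|case: ifP => _]; ring.
- have hA : A = - (2 * B) by apply/eqP; rewrite -addr_eq0 addrC hp.
  apply: (sing 1 1 0); [by rewrite !xpair_eqE oner_eq0|by rewrite qform_eval hA; ring|].
  by move=> i; rewrite qform_deriv hA; case: ifP => _; [|case: ifP => _]; ring.
Qed.

Lemma degenerate_qformP (A B Cu : R) : (2 : R) != 0 ->
  degenerate (qform A B Cu) <-> [\/ Cu = 0, 2 * B - A = 0 | 2 * B + A = 0].
Proof.
move=> two0; split; last exact: degenerate_qform_of.
move=> [x [y [u [nz [_ hd]]]]].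
have := hd (@Ordinal 3 0 isT); have := hd (@Ordinal 3 1 isT).
have := hd (@Ordinal 3 2 isT); rewrite !qform_deriv /= => hu hy hx.
have [C0|C0] := eqVneq Cu 0; first by constructor 1.
have u0 : u = 0 by move: hu => /eqP; rewrite !mulf_eq0 (negbTE two0) (negbTE C0) orbF => /eqP.
have [/eqP|D0] := eqVneq ((2 * B - A) * (2 * B + A)) 0.
  by rewrite mulf_eq0 => /orP [] /eqP h; [constructor 2|constructor 3].
(* the gradient in (x, y) is a linear system of determinant (2B - A)(2B + A) *)
have ex : (2 * B - A) * (2 * B + A) * x = 2 * B * (y * A + 2 * x * B) - A * (x * A + 2 * y * B)
  by ring.
have ey : (2 * B - A) * (2 * B + A) * y = 2 * B * (x * A + 2 * y * B) - A * (y * A + 2 * x * B)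
  by ring.
rewrite hx hy !mulr0 subrr in ex ey.
move/(mul_neq0_eq0 _ D0): ex => x0; move/(mul_neq0_eq0 _ D0): ey => y0.
by move: nz; rewrite x0 y0 u0 eqxx.
Qed.

End TernaryQuadraticForm.

Section Chebyshev.
Variables (R : fieldType) (z : R).

Lemma int_rec2_eq0 (f : int -> R) : f 0 = 0 -> f 1 = 0 ->
  (forall b, f (b + 1) = z * f b - f (b - 1)) -> forall b, f b = 0.
Proof.
move=> f0 f1 frec.
have up (n : nat) : f n = 0 /\ f (n%:Z + 1) = 0.
  elim: n => [|n [IH1 IH2]]; first by split.
  have -> : Posz n.+1 = n%:Z + 1 by lia.
  split=> //; rewrite frec IH2 (_ : n%:Z + 1 - 1 = n) ?IH1; [ring|lia].
have down (n : nat) : f (- n%:Z) = 0 /\ f (- n%:Z + 1) = 0.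
  elim: n => [|n [IH1 IH2]]; first by split.
  have -> : - Posz n.+1 = - n%:Z - 1 by lia.
  rewrite (_ : - n%:Z - 1 + 1 = - n%:Z); last by lia.
  by split=> //; move: (frec (- n%:Z)); rewrite IH1 IH2 mulr0 sub0r => /eqP; rewrite eq_sym oppr_eq0 => /eqP.
by case=> n; [case: (up n)|rewrite NegzE; case: (down n.+1)].
Qed.

Local Notation S j := (cheb j z).

Lemma cheb_rec_pred j : S (j - 2) = z * S (j - 1) - S j.
Proof. by rewrite -[in S j](subrK 1 j) cheb_rec (_ : j - 1 - 1 = j - 2); ring. Qed.

Lemma chebD a b : S (a + b) = S a * S b - S (a - 1) * S (b - 1).
Proof.
pose f b := S (a + b) - (S a * S b - S (a - 1) * S (b - 1)).
suff : f b = 0 by move/eqP; rewrite subr_eq0 => /eqP.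
apply: int_rec2_eq0 => {b} [||b]; rewrite /f.
- by rewrite addr0 /= /Snat /=; ring.
- by rewrite cheb_rec subrr cheb0 cheb1; ring.
- rewrite !addrA addrK (cheb_rec z (a + b)) (cheb_rec z b).
  by rewrite (_ : b - 1 - 1 = b - 2) ?cheb_rec_pred; ring.
Qed.

Lemma chebN j : S (- j) = - S (j - 2).
Proof.
pose f j := S (- j) + S (j - 2).
suff : f j = 0 by move/eqP; rewrite addr_eq0 => /eqP.
apply: int_rec2_eq0 => {j} [||j]; rewrite /f; [by rewrite /= /Snat /=; ring..|].
rewrite (_ : - (j + 1) = - j + 1 - 2) ?cheb_rec_pred; last by ring.
rewrite !addrK opprB (addrC (- j)) (cheb_rec z j).
by rewrite (_ : j - 1 - 1 = j - 2) ?(cheb_rec_pred j); ring.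
Qed.

Lemma cheb_cassini j : S j ^+ 2 - z * S j * S (j - 1) + S (j - 1) ^+ 2 = 1.
Proof.
have := chebD j (- j); rewrite subrr cheb0 (_ : - j - 1 = - (j + 1)); last by ring.
rewrite (chebN j) (chebN (j + 1)) (_ : j + 1 - 2 = j - 1); last by ring.
by rewrite (cheb_rec_pred j) => ->; ring.
Qed.

Lemma cheb_triple j :
  S (3 * j) = S j ^+ 3 - 3 * S j * S (j - 1) ^+ 2 + z * S (j - 1) ^+ 3.
Proof.
rewrite (_ : 3 * j = j + j + j); last by ring.
rewrite (chebD (j + j) j) (_ : j + j - 1 = j + (j - 1)); last by ring.
rewrite (chebD j j) (chebD j (j - 1)) (_ : j - 1 - 1 = j - 2); last by ring.
by rewrite (cheb_rec_pred j); ring.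
Qed.

End Chebyshev.

Section Fibre.
Variables (R : fieldType) (z s t : R).

Definition fibre_qform : {mpoly R[3]} :=
  qform ((1 + z * s * t) * t) (- s * t * t) ((- z + (4 - z ^+ 2) * s * t) * t - s).

Hypothesis cassini : s ^+ 2 - z * s * t + t ^+ 2 = 1.

Let cassini_mul k : k * (s ^+ 2 - z * s * t + t ^+ 2 - 1) = 0.
Proof. by rewrite cassini subrr mulr0. Qed.

Lemma fibre_coef_u2 :
  (- z + (4 - z ^+ 2) * s * t) * t - s = - (s ^+ 3 - 3 * s * t ^+ 2 + z * t ^+ 3).
Proof. by rewrite -[RHS]addr0 -(cassini_mul (s + z * t)); ring. Qed.

Lemma fibre_coef_diff : 2 * (- s * t * t) - (1 + z * s * t) * t = - t * (s + t) ^+ 2.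
Proof. by rewrite -[RHS]addr0 -(cassini_mul t); ring. Qed.

Lemma fibre_coef_sum : 2 * (- s * t * t) + (1 + z * s * t) * t = t * (s - t) ^+ 2.
Proof. by rewrite -[RHS]subr0 -(cassini_mul t); ring. Qed.

Let st_neq0 : ~ (s = 0 /\ t = 0).
Proof.
case=> s0 t0; have : (1 : R) = 0 by rewrite -cassini s0 t0; ring.
by move/eqP; rewrite oner_eq0.
Qed.

Lemma fibre_degenerateP : (2 : R) != 0 -> degenerate fibre_qform <->
  [\/ t = 0, s ^+ 3 - 3 * s * t ^+ 2 + z * t ^+ 3 = 0, s - t = 0 | s + t = 0].
Proof.
move=> two0; rewrite degenerate_qformP // fibre_coef_u2 fibre_coef_diff fibre_coef_sum.
split.
- case=> [/eqP|/eqP|/eqP]; rewrite ?(oppr_eq0, mulNr, mulf_eq0, sqrf_eq0).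
  + by move/eqP; constructor 2.
  + by case/or3P=> /eqP; [constructor 1|constructor 4|constructor 4].
  + by case/or3P=> /eqP; [constructor 1|constructor 3|constructor 3].
- by case=> h; [constructor 2|constructor 1|constructor 3|constructor 2]; rewrite h; ring.
Qed.

Lemma fibre_t0 x y u : t = 0 -> fibre_qform.@[pt3 x y u] = 0 <-> u ^+ 2 = 0.
Proof.
move=> t0; apply: (@eq0_scaled _ (- s)); last by rewrite qform_eval t0; ring.
by rewrite oppr_eq0; apply/eqP => s0; exact: st_neq0.
Qed.

Lemma fibre_triple x y u : s ^+ 3 - 3 * s * t ^+ 2 + z * t ^+ 3 = 0 ->
  fibre_qform.@[pt3 x y u] = 0 <-> (x * s - y * t) * (y * s - x * t) = 0.
Proof.
move=> hX; have t0 : t != 0.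
  apply/eqP => t0; apply: st_neq0; split=> //.
  have : s ^+ 3 = 0 by rewrite -hX t0; ring.
  by move/eqP; rewrite expf_eq0 => /andP[_ /eqP].
apply: (eq0_scaled t0); rewrite qform_eval fibre_coef_u2 hX oppr0 mulr0 addr0.
by rewrite -[RHS]addr0 -(cassini_mul (- (x * y * t))); ring.
Qed.

Lemma fibre_diff x y u : s - t = 0 ->
  fibre_qform.@[pt3 x y u] = 0 <-> (x - y) ^+ 2 - (2 - z) * u ^+ 2 = 0.
Proof.
move=> /eqP; rewrite subr_eq0 => /eqP ht.
apply: (@eq0_scaled _ (- s ^+ 3)).
  by rewrite oppr_eq0 expf_eq0 /=; apply/eqP => s0; apply: st_neq0; rewrite -ht.
rewrite qform_eval -[RHS]addr0 -(cassini_mul (- (x * y * s - u ^+ 2 * (1 + z) * s))).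
by rewrite -ht; ring.
Qed.

Lemma fibre_sum x y u : s + t = 0 ->
  fibre_qform.@[pt3 x y u] = 0 <-> (x + y) ^+ 2 - (2 + z) * u ^+ 2 = 0.
Proof.
move=> /eqP; rewrite addr_eq0 => /eqP ht.
apply: (@eq0_scaled _ (- s ^+ 3)).
  rewrite oppr_eq0 expf_eq0 /=; apply/eqP => s0; apply: st_neq0.
  by split=> //; apply/eqP; rewrite -oppr_eq0 -ht s0.
rewrite qform_eval -[RHS]addr0 -(cassini_mul (x * y * s + u ^+ 2 * (1 - z) * s)).
by rewrite ht; ring.
Qed.

End Fibre.

Section FibresOfPhi.
Variables (R : fieldType) (m : int).
Hypothesis hm : 1 <= m \/ m <= -2.

Lemma Tj_w1 j (z : R) : Tj j z 1 = cheb j z.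
Proof. by rewrite /Tj exp1rz mul1r divr1. Qed.

Lemma Fpol_w1 (z : R) : Fpol m z 1 = fibre_qform z (cheb m z) (cheb (m - 1) z).
Proof.
rewrite Fpol_Fpaper ?oner_neq0 // Fpaper_nf !Tj_w1 exp1rz expr1n /cst mpolyC1 mul1r.
by rewrite /fibre_qform /qform /cst; congr (_ * (_ %:MP) + _ * (_ %:MP) + _ * (_ %:MP)); ring.
Qed.

Lemma Tpair_inf n : Tpair (1 : R) 0 n = (1, 1).
Proof. by elim: n => [|n IH] //=; rewrite IH /= expr0n /=; congr (_, _); ring. Qed.

Lemma Fpol_inf : exists c : R, c != 0 /\ Fpol m 1 0 = qform 0 0 c.
Proof.
case: m hm => [[|k]|[|k]] hm'; try by case: hm'; lia.
- exists (-1); split; first by rewrite oppr_eq0 oner_neq0.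
  rewrite /Fpol /Th !Tpair_inf /= /qform /Qform /cst !expr0n /=.
  by rewrite !(mul0r, mul1r, expr1n, mpolyC0, mpolyCN, mpolyC1); ring.
- exists 1; split; first exact: oner_neq0.
  rewrite /Fpol /Th !Tpair_inf /= /qform /Qform /cst !expr0n /=.
  by rewrite !(mul0r, mul1r, expr1n, mpolyC0, mpolyCN, mpolyC1); ring.
Qed.

Lemma fibre_inf :
  degenerate (Fpol m (1 : R) 0) /\ forall x y u : R, (Fpol m 1 0).@[pt3 x y u] = 0 <-> u ^+ 2 = 0.
Proof.
have [c [c0 ->]] := Fpol_inf; split.
  by apply: degenerate_qform_of; constructor 2; rewrite mulr0 subr0.
by move=> x y u; apply: eq0_scaled c0 _; rewrite qform_eval; ring.
Qed.

End FibresOfPhi.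

Theorem proposition7p7 (m : int) (hm : (1 <= m) \/ (m <= -2)) :
  let F := Fpol (R := C) m in
  let S := fun (j : int) (z : C) => cheb j z in
  (* the fiber over (1:0) is degenerate and equals {u^2 = 0} *)
  (degenerate (F 1 0) /\
     forall x y u : C, (F 1 0).@[pt3 x y u] = 0 <-> u ^+ 2 = 0)
  (* the degenerate fibers over (z:1) are exactly those listed *)
  /\ (forall z : C, degenerate (F z 1) <->
        [\/ S (m - 1) z = 0, S (3 * m) z = 0,
            S m z - S (m - 1) z = 0 | S m z + S (m - 1) z = 0])
  /\ (forall z : C, S (m - 1) z = 0 ->
        forall x y u : C, (F z 1).@[pt3 x y u] = 0 <-> u ^+ 2 = 0)
  /\ (forall z : C, S (3 * m) z = 0 ->
        forall x y u : C, (F z 1).@[pt3 x y u] = 0 <->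
          (x * S m z - y * S (m - 1) z) * (y * S m z - x * S (m - 1) z) = 0)
  /\ (forall z : C, S m z - S (m - 1) z = 0 ->
        forall x y u : C, (F z 1).@[pt3 x y u] = 0 <->
          (x - y) ^+ 2 - (2 - z) * u ^+ 2 = 0)
  /\ (forall z : C, S m z + S (m - 1) z = 0 ->
        forall x y u : C, (F z 1).@[pt3 x y u] = 0 <->
          (x + y) ^+ 2 - (2 + z) * u ^+ 2 = 0).
Proof.
move=> F S; rewrite /F /S {F S}.
have two0 : (2 : C) != 0 by rewrite pnatr_eq0.
split; first exact: fibre_inf.
split.
  by move=> z; rewrite Fpol_w1 // cheb_triple; apply: fibre_degenerateP; rewrite ?cheb_cassini.
split; first by move=> z ht x y u; rewrite Fpol_w1 //; apply: fibre_t0; rewrite ?cheb_cassini.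
split.
  move=> z h3 x y u; rewrite Fpol_w1 //; apply: fibre_triple; rewrite ?cheb_cassini //.
  by rewrite -cheb_triple.
split; first by move=> z hd x y u; rewrite Fpol_w1 //; apply: fibre_diff; rewrite ?cheb_cassini.
by move=> z hs x y u; rewrite Fpol_w1 //; apply: fibre_sum; rewrite ?cheb_cassini.
Qed.
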